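(* Let $d = 10$. (i) If $n = 4(12m+5) + 4(6k+3)\sqrt{10}$ with $m, k \in \mathbb{Z}$, $m \equiv 0 \pmod 5$ and $k \equiv 2 \pmod 5$, then there exist infinitely many $D(n)$-quadruples in $\mathbb{Z}[\sqrt{10}]$. (ii) If $n = 4(12m+11) + 4(6k+3)\sqrt{10}$ with $m, k \in \mathbb{Z}$, $m \equiv 2 \pmod 5$ and $k \equiv 2 \pmod 5$, then there exist infinitely many $D(n)$-quadruples in $\mathbb{Z}[\sqrt{10}]$.
   Context: For $n \in \mathbb{Z}[\sqrt{d}]$, a set $\{a_1,a_2,a_3,a_4\}$ of four distinct non-zero elements of $\mathbb{Z}[\sqrt{d}]$ is called a $D(n)$-quadruple in $\mathbb{Z}[\sqrt{d}]$ if $a_ia_j + n$ is a square of an element of $\mathbb{Z}[\sqrt{d}]$ for all $1 \le i < j \le 4$. *)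

From Stdlib Require Import ZArith List.
Open Scope Z_scope.

(* Elements of Z[sqrt d] represented as pairs (x, y) meaning x + y*sqrt d. *)
Record Zsqrt := mkZs { re : Z; im : Z }.

Definition zs_add (a b : Zsqrt) : Zsqrt := mkZs (re a + re b) (im a + im b).
Definition zs_mul (d : Z) (a b : Zsqrt) : Zsqrt :=
  mkZs (re a * re b + d * im a * im b) (re a * im b + im a * re b).

Definition zs_zero : Zsqrt := mkZs 0 0.

Definition is_square (d : Z) (z : Zsqrt) : Prop := exists w, zs_mul d w w = z.

Definition D_quadruple (d : Z) (n : Zsqrt) (a1 a2 a3 a4 : Zsqrt) : Prop :=
  NoDup (a1 :: a2 :: a3 :: a4 :: nil) /\
  Forall (fun a => a <> zs_zero) (a1 :: a2 :: a3 :: a4 :: nil) /\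
  is_square d (zs_add (zs_mul d a1 a2) n) /\
  is_square d (zs_add (zs_mul d a1 a3) n) /\
  is_square d (zs_add (zs_mul d a1 a4) n) /\
  is_square d (zs_add (zs_mul d a2 a3) n) /\
  is_square d (zs_add (zs_mul d a2 a4) n) /\
  is_square d (zs_add (zs_mul d a3 a4) n).

(* A quadruple as a set: a list of its elements (order irrelevant via
   membership comparison). *)
Definition same_set (s t : list Zsqrt) : Prop := forall x, In x s <-> In x t.

(* There exist infinitely many D(n)-quadruples (as sets): no finite family of
   sets contains all of them. *)
Definition infinitely_many_D_quadruples (d : Z) (n : Zsqrt) : Prop :=
  forall F : list (list Zsqrt),
    exists a1 a2 a3 a4,
      D_quadruple d n a1 a2 a3 a4 /\
      forall s, In s F -> ~ same_set s (a1 :: a2 :: a3 :: a4 :: nil).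

(* For M, L in Z[sqrt 10] put
     n = 4 + 4 (1 + 12 L) M,
     B = M (18L+1)^2 + 24 L,  C = M (18L+2)^2 + 24 L + 4,  D = M (36L+3)^2 + 8 (1 + 12 L);
   then each of the six products of two elements of {M, B, C, D}, plus n, is an
   explicit square (a polynomial identity).  Reducing the rational part modulo 3
   and the sqrt 10-part modulo 2 shows that these four elements are non-zero and
   pairwise distinct as soon as M is congruent to 1 + sqrt 10 in this sense and
   L <> 0 (B <> M uses that Z[sqrt 10] is an integral domain).

   To realise a prescribed n = 4 + 4 Y with Y of that residue, take the units
   U_j = (721 + 228 sqrt 10)^(j+1) = 1 + 12 L_j of norm 1 and M_j = Y * conj U_j:
   then U_j M_j = Y and M_j has the residue of Y.  The M_j are pairwise distinct,
   so the quadruples are infinitely many.  Both families of the theorem have such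
   a Y. *)

From Stdlib Require Import ZArith List Lia Classical.
Open Scope Z_scope.

Definition zs_one : Zsqrt := mkZs 1 0.
Definition zs_opp (x : Zsqrt) : Zsqrt := mkZs (- re x) (- im x).
Definition zs_sub (x y : Zsqrt) : Zsqrt := zs_add x (zs_opp y).

Definition zs_of_Z (z : Z) : Zsqrt := mkZs z 0.
Definition zs_to_Z (x : Zsqrt) : option Z :=
  match x with mkZs z 0 => Some z | _ => None end.

Declare Scope zs_scope.
Delimit Scope zs_scope with zs.
Number Notation Zsqrt zs_of_Z zs_to_Z : zs_scope.
Notation "x + y" := (zs_add x y) : zs_scope.
Notation "x - y" := (zs_sub x y) : zs_scope.
Notation "- x" := (zs_opp x) : zs_scope.
Notation "x * y" := (zs_mul 10 x y) : zs_scope.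

Ltac zs_componentwise :=
  repeat match goal with
         | x : Zsqrt |- _ =>
             let a := fresh "a" in let b := fresh "b" in destruct x as [a b]
         end;
  unfold zs_sub, zs_add, zs_mul, zs_opp, zs_one, zs_zero, zs_of_Z; cbn [re im];
  f_equal; ring.

(* Z[sqrt 10] is a commutative ring, and Z embeds into it; registering both lets
   [ring] prove polynomial identities with integer coefficients. *)
Lemma zs_ring_theory :
  ring_theory zs_zero zs_one zs_add (zs_mul 10) zs_sub zs_opp (@eq Zsqrt).
Proof. split; intros; zs_componentwise. Qed.

Lemma zs_of_Z_morph :
  ring_morph zs_zero zs_one zs_add (zs_mul 10) zs_sub zs_opp (@eq Zsqrt)
    0 1 Z.add Z.mul Z.sub Z.opp Z.eqb zs_of_Z.
Proof.
  split; intros; try zs_componentwise.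
  now rewrite (proj1 (Z.eqb_eq _ _) H).
Qed.

Ltac zs_constant t :=
  match t with
  | mkZs ?z Z0 =>
      match isZcst z with true => z | _ => constr:(InitialRing.NotConstant) end
  | _ => constr:(InitialRing.NotConstant)
  end.

Add Ring zs_ring : zs_ring_theory
  (morphism zs_of_Z_morph, constants [zs_constant]).

Definition zs_conj (x : Zsqrt) : Zsqrt := mkZs (re x) (- im x).
Definition zs_norm (x : Zsqrt) : Z := re x * re x - 10 * im x * im x.

Lemma zs_mul_conj (x : Zsqrt) : (x * zs_conj x)%zs = zs_of_Z (zs_norm x).
Proof. unfold zs_conj, zs_norm; zs_componentwise. Qed.

(* Conjugation is a ring morphism; we only need its compatibility with
   the affine maps x |-> 1 + 12 x. *)
Lemma zs_conj_affine (x : Zsqrt) : zs_conj (1 + 12 * x)%zs = (1 + 12 * zs_conj x)%zs.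
Proof. unfold zs_conj; zs_componentwise. Qed.

Lemma zs_norm_mul (x y : Zsqrt) : zs_norm (x * y)%zs = zs_norm x * zs_norm y.
Proof.
  destruct x as [a b], y as [c e]; unfold zs_norm, zs_mul; cbn [re im]; ring.
Qed.

(* sqrt 10 is irrational: by 2-adic descent, a^2 = 10 b^2 forces b = 0. *)
Lemma sqrt10_irrational (a b : Z) : a * a = 10 * b * b -> b = 0.
Proof.
  remember (Z.abs_nat b) as size eqn:Hsize. revert a b Hsize.
  induction size as [size IH] using lt_wf_ind; intros a b Hsize Hab.
  destruct (Z.Even_or_Odd a) as [[t ->]|[t ->]]; [|nia].
  destruct (Z.Even_or_Odd b) as [[s ->]|[s ->]]; [|nia].
  (* a = 2 t and b = 2 s give t^2 = 10 s^2 with |s| < |b| unless b = 0. *)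
  destruct (Z.eq_dec s 0) as [->|Hs]; [reflexivity|].
  enough (s = 0) by lia.
  apply (IH (Z.abs_nat s)) with t; [lia|reflexivity|lia].
Qed.

Lemma zs_norm_eq0 (x : Zsqrt) : zs_norm x = 0 -> x = 0%zs.
Proof.
  destruct x as [a b]; unfold zs_norm; cbn [re im]; intro Hnorm.
  assert (b = 0) as -> by (apply (sqrt10_irrational a); lia).
  assert (a = 0) as -> by nia.
  reflexivity.
Qed.

(* Z[sqrt 10] is an integral domain, since the norm is multiplicative. *)
Lemma zs_integral (x y : Zsqrt) : (x * y)%zs = 0%zs -> x = 0%zs \/ y = 0%zs.
Proof.
  intro Hxy.
  assert (Hnorm : zs_norm x * zs_norm y = 0)
    by (rewrite <- zs_norm_mul, Hxy; reflexivity).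
  apply Z.mul_eq_0 in Hnorm as [Hx|Hy].
  - left; exact (zs_norm_eq0 x Hx).
  - right; exact (zs_norm_eq0 y Hy).
Qed.

Definition unit_of (L : Zsqrt) : Zsqrt := (1 + 12 * L)%zs.

Section Construction.

Variables M L : Zsqrt.

Definition n_of : Zsqrt := (4 + 4 * unit_of L * M)%zs.
Definition quad_B : Zsqrt := (M * (18 * L + 1) * (18 * L + 1) + 24 * L)%zs.
Definition quad_C : Zsqrt := (M * (18 * L + 2) * (18 * L + 2) + 24 * L + 4)%zs.
Definition quad_D : Zsqrt := (M * (36 * L + 3) * (36 * L + 3) + 8 * unit_of L)%zs.

Ltac unfold_construction := unfold n_of, quad_B, quad_C, quad_D, unit_of.

Lemma construction_squares :
  is_square 10 (M * quad_B + n_of)%zs /\ is_square 10 (M * quad_C + n_of)%zs /\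
  is_square 10 (M * quad_D + n_of)%zs /\ is_square 10 (quad_B * quad_C + n_of)%zs /\
  is_square 10 (quad_B * quad_D + n_of)%zs /\ is_square 10 (quad_C * quad_D + n_of)%zs.
Proof.
  unfold_construction.
  split; [exists (M * (18 * L + 1) + 2)%zs; ring|].
  split; [exists (M * (18 * L + 2) + 2)%zs; ring|].
  split; [exists (M * (36 * L + 3) + 2)%zs; ring|].
  split; [exists (M * (18 * L + 1) * (18 * L + 2) + 2 * (1 + 12 * L))%zs; ring|].
  split; [exists (M * (18 * L + 1) * (36 * L + 3) + 4 * (1 + 12 * L) - 2)%zs; ring|].
  exists (M * (18 * L + 2) * (36 * L + 3) + 4 * (1 + 12 * L) + 2)%zs; ring.
Qed.

(* Modulo 12, B, C and D are M, 4 M + 4 and 9 M + 8; B - M factors through L. *)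
Lemma quad_B_form : quad_B = (M + 12 * (L * (3 * M + 27 * L * M + 2)))%zs.
Proof. unfold_construction; ring. Qed.

Lemma quad_C_form : quad_C = (4 * M + 4 + 12 * (27 * L * L * M + 6 * L * M + 2 * L))%zs.
Proof. unfold_construction; ring. Qed.

Lemma quad_D_form :
  quad_D = (9 * M + 8 + 12 * (108 * L * L * M + 18 * L * M + 8 * L))%zs.
Proof. unfold_construction; ring. Qed.

End Construction.

Definition residue (x : Zsqrt) : Z * Z := (re x mod 3, im x mod 2).

Lemma residue_shift (x t : Zsqrt) : residue (x + 12 * t)%zs = residue x.
Proof.
  destruct x as [a b], t as [c e]; unfold residue, zs_add, zs_mul; cbn [re im].
  f_equal; Z.div_mod_to_equations; lia.
Qed.

Lemma residue_affine (x : Zsqrt) : residue x = (1, 1) ->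
  residue (4 * x + 4)%zs = (2, 0) /\ residue (9 * x + 8)%zs = (2, 1).
Proof.
  destruct x as [a b]; unfold residue, zs_add, zs_mul; cbn [re im].
  intro Hx; injection Hx as Ha Hb.
  split; f_equal; Z.div_mod_to_equations; lia.
Qed.

Lemma residue_zero : residue zs_zero = (0, 0).
Proof. reflexivity. Qed.

Lemma nodup4 (a b c e : Zsqrt) :
  a <> b -> a <> c -> a <> e -> b <> c -> b <> e -> c <> e -> NoDup (a :: b :: c :: e :: nil).
Proof. intros; repeat constructor; cbn; intuition congruence. Qed.

Lemma construction_quadruple (M L : Zsqrt) :
  residue M = (1, 1) -> L <> 0%zs ->
  D_quadruple 10 (n_of M L) M (quad_B M L) (quad_C M L) (quad_D M L).
Proof.
  intros HM HL.
  destruct (residue_affine M HM) as [H4 H9].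
  assert (HB : residue (quad_B M L) = (1, 1)) by now rewrite quad_B_form, residue_shift.
  assert (HC : residue (quad_C M L) = (2, 0)) by now rewrite quad_C_form, residue_shift.
  assert (HD : residue (quad_D M L) = (2, 1)) by now rewrite quad_D_form, residue_shift.
  (* B and M share their residue; B - M = 12 L W where W has rational part 2 mod 3. *)
  assert (HBM : M <> quad_B M L).
  { rewrite quad_B_form; set (V := (M + 9 * L * M)%zs).
    replace (3 * M + 27 * L * M + 2)%zs with (2 + 3 * V)%zs by (unfold V; ring).
    intro HMB.
    assert (H0 : (12 * (L * (2 + 3 * V)))%zs = 0%zs).
    { transitivity ((M + 12 * (L * (2 + 3 * V))) - M)%zs; [ring|].
      rewrite <- HMB; ring. }
    apply zs_integral in H0 as [H12|H0]; [discriminate|].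
    apply zs_integral in H0 as [H0|H0]; [contradiction|].
    (* the rational part of 2 + 3 V is 2 modulo 3 *)
    destruct V as [a b]; apply (f_equal re) in H0.
    unfold zs_add, zs_mul in H0; cbn [re im] in H0; lia. }
  split; [|split; [|exact (construction_squares M L)]].
  - apply nodup4; trivial; intro E;
      apply (f_equal residue) in E; congruence.
  - repeat (apply Forall_cons;
      [intro E; apply (f_equal residue) in E; rewrite residue_zero in E; congruence|]).
    apply Forall_nil.
Qed.

(* The unit 721 + 228 sqrt 10 = unit_of L0 has norm 1; unit_of (unit_L j) is its
   (j+1)-th power. *)
Definition L0 : Zsqrt := mkZs 60 19.

Fixpoint unit_L (j : nat) : Zsqrt :=
  match j with
  | O => L0
  | S j => (L0 + unit_L j + 12 * L0 * unit_L j)%zs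
  end.

Lemma unit_L_succ (j : nat) :
  unit_of (unit_L (S j)) = (mkZs 721 228 * unit_of (unit_L j))%zs.
Proof.
  transitivity (unit_of L0 * unit_of (unit_L j))%zs; [|reflexivity].
  unfold unit_of; cbn [unit_L]; ring.
Qed.

Lemma unit_L_norm (j : nat) : zs_norm (unit_of (unit_L j)) = 1.
Proof.
  induction j as [|j IH]; [reflexivity|].
  rewrite unit_L_succ, zs_norm_mul, IH; reflexivity.
Qed.

Lemma unit_L_bounds (j : nat) :
  721 <= re (unit_of (unit_L j)) /\ 0 <= im (unit_of (unit_L j)).
Proof.
  induction j as [|j IH]; [cbn; lia|].
  rewrite unit_L_succ; destruct (unit_of (unit_L j)) as [a b].
  unfold zs_mul; cbn [re im] in *; lia.
Qed.

Lemma unit_L_increasing (i j : nat) :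
  (i < j)%nat -> re (unit_of (unit_L i)) < re (unit_of (unit_L j)).
Proof.
  induction 1 as [|j _ IH];
    [pose proof (unit_L_bounds i) as Hb; rewrite unit_L_succ
    |pose proof (unit_L_bounds j) as Hb; rewrite unit_L_succ];
    destruct (unit_of (unit_L _)) as [a b]; unfold zs_mul; cbn [re im] in *; lia.
Qed.

Lemma unit_L_injective (i j : nat) : unit_of (unit_L i) = unit_of (unit_L j) -> i = j.
Proof.
  intro E; destruct (Nat.lt_trichotomy i j) as [Hij|[Hij|Hij]]; trivial;
    apply unit_L_increasing in Hij; rewrite E in Hij; lia.
Qed.

Lemma unit_L_nonzero (j : nat) : unit_L j <> 0%zs.
Proof.
  intro E; pose proof (unit_L_bounds j) as [Hre _].
  rewrite E in Hre; cbn in Hre; lia.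
Qed.

Section Realisation.

Variable Y : Zsqrt.
Hypothesis HY : residue Y = (1, 1).

(* M_j = Y * conj U_j, so that U_j M_j = Y N(U_j) = Y. *)
Definition M_of (j : nat) : Zsqrt := (Y * zs_conj (unit_of (unit_L j)))%zs.

Lemma unit_mul_M_of (j : nat) : (unit_of (unit_L j) * M_of j)%zs = Y.
Proof.
  unfold M_of; set (U := unit_of (unit_L j)).
  transitivity (Y * (U * zs_conj U))%zs; [ring|].
  rewrite zs_mul_conj; unfold U; rewrite unit_L_norm.
  change (zs_of_Z 1) with 1%zs; ring.
Qed.

Lemma n_of_M_of (j : nat) : n_of (M_of j) (unit_L j) = (4 + 4 * Y)%zs.
Proof.
  transitivity (4 + 4 * (unit_of (unit_L j) * M_of j))%zs; [unfold n_of; ring|].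
  rewrite unit_mul_M_of; reflexivity.
Qed.

(* Since conj U_j = 1 + 12 conj L_j, M_j is congruent to Y modulo 12. *)
Lemma M_of_residue (j : nat) : residue (M_of j) = (1, 1).
Proof.
  unfold M_of, unit_of; rewrite zs_conj_affine.
  replace (Y * (1 + 12 * zs_conj (unit_L j)))%zs
    with (Y + 12 * (Y * zs_conj (unit_L j)))%zs by ring.
  rewrite residue_shift; exact HY.
Qed.

Lemma M_of_injective (i j : nat) : M_of i = M_of j -> i = j.
Proof.
  intro E; apply unit_L_injective.
  assert (H0 : ((unit_of (unit_L i) - unit_of (unit_L j)) * M_of i)%zs = 0%zs).
  { transitivity (unit_of (unit_L i) * M_of i - unit_of (unit_L j) * M_of j)%zs;
      [rewrite E; ring|].
    rewrite !unit_mul_M_of; ring. }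
  apply zs_integral in H0 as [H0|H0].
  - transitivity ((unit_of (unit_L i) - unit_of (unit_L j)) + unit_of (unit_L j))%zs;
      [ring|rewrite H0; ring].
  - (* M_i has residue (1, 1), hence is non-zero *)
    apply (f_equal residue) in H0; rewrite M_of_residue in H0; discriminate.
Qed.

End Realisation.

Lemma injective_escapes {A : Type} (f : nat -> A) :
  (forall i j, f i = f j -> i = j) -> forall l : list A, exists j, ~ In (f j) l.
Proof.
  intros Hinj l; apply not_all_not_ex; intro Hall.
  assert (Hincl : incl (map f (seq 0 (S (length l)))) l).
  { intros x Hx; apply in_map_iff in Hx as [j [<- _]]; exact (NNPP _ (Hall j)). }
  assert (Hnodup : NoDup (map f (seq 0 (S (length l)))))
    by (apply NoDup_map_NoDup_ForallPairs; [intros i j _ _; apply Hinj|apply seq_NoDup]).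
  pose proof (NoDup_incl_length Hnodup Hincl) as Hlen.
  rewrite length_map, length_seq in Hlen; lia.
Qed.

Lemma infinitely_many_of_family (d : Z) (n : Zsqrt) (a b c e : nat -> Zsqrt) :
  (forall j, D_quadruple d n (a j) (b j) (c j) (e j)) ->
  (forall i j, a i = a j -> i = j) ->
  infinitely_many_D_quadruples d n.
Proof.
  intros Hquad Hinj F.
  destruct (injective_escapes a Hinj (concat F)) as [j Hj].
  exists (a j), (b j), (c j), (e j); split; [apply Hquad|].
  intros s Hs Hsame; apply Hj, in_concat.
  exists s; split; [exact Hs|apply Hsame; left; reflexivity].
Qed.

Lemma infinitely_many_of_residue (Y : Zsqrt) :
  residue Y = (1, 1) -> infinitely_many_D_quadruples 10 (4 + 4 * Y)%zs.
Proof.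
  intro HY.
  apply (infinitely_many_of_family 10 _ (M_of Y)
           (fun j => quad_B (M_of Y j) (unit_L j)) (fun j => quad_C (M_of Y j) (unit_L j))
           (fun j => quad_D (M_of Y j) (unit_L j))); [|exact (M_of_injective Y HY)].
  intro j; rewrite <- (n_of_M_of Y j).
  apply construction_quadruple; [exact (M_of_residue Y HY j)|apply unit_L_nonzero].
Qed.

(* Both families have n = 4 + 4 Y with Y = (12 m + 4) + (6 k + 3) sqrt 10, resp.
   Y = (12 m + 10) + (6 k + 3) sqrt 10, of residue (1, 1). *)
Theorem mainTheorem4 :
  (forall m k : Z, m mod 5 = 0 -> k mod 5 = 2 ->
     infinitely_many_D_quadruples 10
       (mkZs (4 * (12 * m + 5)) (4 * (6 * k + 3)))) /\
  (forall m k : Z, m mod 5 = 2 -> k mod 5 = 2 ->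
     infinitely_many_D_quadruples 10
       (mkZs (4 * (12 * m + 11)) (4 * (6 * k + 3)))).
Proof.
  split; intros m k _ _.
  - replace (mkZs (4 * (12 * m + 5)) (4 * (6 * k + 3)))
      with (4 + 4 * mkZs (12 * m + 4) (6 * k + 3))%zs by zs_componentwise.
    apply infinitely_many_of_residue.
    unfold residue; cbn [re im]; f_equal; Z.div_mod_to_equations; lia.
  - replace (mkZs (4 * (12 * m + 11)) (4 * (6 * k + 3)))
      with (4 + 4 * mkZs (12 * m + 10) (6 * k + 3))%zs by zs_componentwise.
    apply infinitely_many_of_residue.
    unfold residue; cbn [re im]; f_equal; Z.div_mod_to_equations; lia.
Qed.
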